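(* Let $\Sigma_0>0$, $\sigma_u>0$, $\Delta t=\tfrac12$, and let real numbers $\beta_1,\beta_2,\lambda_1,\lambda_2,\alpha_1,\Sigma_1$ with $\alpha_2=0$ form a two-period linear equilibrium of Kyle's (1985) model, i.e. for $n=1,2$: $$\beta_n=\frac{1-2\alpha_n\lambda_n}{2\lambda_n(1-\alpha_n\lambda_n)},\quad \lambda_n=\frac{\beta_n\Sigma_{n-1}}{\beta_n^2\Sigma_{n-1}+\sigma_u^2\Delta t},\quad \Sigma_n=(1-\lambda_n\beta_n)\Sigma_{n-1},\quad \lambda_n(1-\alpha_n\lambda_n)>0,$$ and $\alpha_1=\dfrac{1}{4\lambda_2(1-\alpha_2\lambda_2)}$. Define $\ell(b)=\dfrac{b\Sigma_0}{b^2\Sigma_0+\sigma_u^2\Delta t}$ for $b\in\mathbb R$ (the first-period pricing rule as a function of the first-period trading intensity under semi-strong market efficiency). Then $\ell'(\beta_1)>0$.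
   Context: Kyle's two-period model: asset value $v\sim N(p_0,\Sigma_0)$; noise orders $u_1,u_2$ i.i.d. $N(0,\sigma_u^2\Delta t)$ independent of $v$; the insider submits $x_n=\beta_n(v-p_{n-1})$; prices move by $p_n-p_{n-1}=\lambda_n(x_n+u_n)$. In Kyle's equilibrium the insider treats $\lambda_n$ as a constant not affected by her choice of $\beta_n$, which yields the displayed equations; the equation $\lambda_n=\beta_n\Sigma_{n-1}/(\beta_n^2\Sigma_{n-1}+\sigma_u^2\Delta t)$ expresses semi-strong market efficiency $p_n=E[v\mid x_1+u_1,\dots,x_n+u_n]$, with $\Sigma_n$ the conditional variance of $v$ after $n$ rounds. *)

From Stdlib Require Import Reals.
Open Scope R_scope.

Definition dt : R := / 2.

(* Insider's first-order condition: beta_n as a function of alpha_n, lambda_n *)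
Definition beta_rule (alpha lambda : R) : R :=
  (1 - 2 * alpha * lambda) / (2 * lambda * (1 - alpha * lambda)).

Definition lambda_rule (beta Sigma sigma_u : R) : R :=
  beta * Sigma / (beta ^ 2 * Sigma + sigma_u ^ 2 * dt).

Definition ell (Sigma0 sigma_u : R) (b : R) : R := lambda_rule b Sigma0 sigma_u.

(* The derivative of [ell] at [b] has the sign of [sigma_u^2 dt - b^2 Sigma0].
   Since [lambda1 = ell beta1], that sign is the sign of [1 - 2 lambda1 beta1],
   and the insider's first-order condition gives
   [(1 - 2 lambda1 beta1) (1 - alpha1 lambda1) = alpha1 lambda1], which is
   positive because [alpha1 = 1 / (4 lambda2) > 0] and the second-order
   conditions make [lambda1] and [1 - alpha1 lambda1] positive. *)

From Stdlib Require Import Reals Lra Psatz.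
From Coquelicot Require Import Coquelicot.
Open Scope R_scope.

Lemma lambda_rule_denom_pos (b S s : R) :
  0 <= S -> s <> 0 -> 0 < b ^ 2 * S + s ^ 2 * dt.
Proof.
  intros hS hs. unfold dt.
  assert (0 < s ^ 2) by (apply pow2_gt_0; exact hs).
  assert (0 <= b ^ 2) by apply pow2_ge_0.
  nra.
Qed.

Lemma ell_derivative (S s b : R) : 0 <= S -> s <> 0 ->
  derivable_pt_lim (ell S s) b
    (S * (s ^ 2 * dt - b ^ 2 * S) / (b ^ 2 * S + s ^ 2 * dt) ^ 2).
Proof.
  intros hS hs.
  pose proof (lambda_rule_denom_pos b S s hS hs) as hD.
  apply is_derive_Reals. unfold ell, lambda_rule.
  auto_derive; unfold dt in *.
  - lra.
  - field. lra.
Qed.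

Lemma ell_derivative_pos (S s b : R) :
  0 < S -> s <> 0 -> b ^ 2 * S < s ^ 2 * dt ->
  0 < S * (s ^ 2 * dt - b ^ 2 * S) / (b ^ 2 * S + s ^ 2 * dt) ^ 2.
Proof.
  intros hS hs hb.
  pose proof (lambda_rule_denom_pos b S s (Rlt_le _ _ hS) hs).
  apply Rdiv_lt_0_compat; [apply Rmult_lt_0_compat |]; nra.
Qed.

(* [lambda * beta = beta^2 S / (beta^2 S + s^2 dt)], so [lambda * beta < 1/2]
   says exactly that the first summand of the denominator is the smaller one. *)
Lemma lambda_rule_mul_lt_half (beta S s : R) : 0 <= S -> s <> 0 ->
  2 * lambda_rule beta S s * beta < 1 -> beta ^ 2 * S < s ^ 2 * dt.
Proof.
  intros hS hs hlt.
  pose proof (lambda_rule_denom_pos beta S s hS hs) as hD.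
  assert (hmul : 2 * lambda_rule beta S s * beta * (beta ^ 2 * S + s ^ 2 * dt)
                 = 2 * (beta ^ 2 * S)).
  { unfold lambda_rule. field. lra. }
  nra.
Qed.

Lemma soc_lambda_pos (alpha lambda : R) :
  0 < alpha -> 0 < lambda * (1 - alpha * lambda) -> 0 < lambda.
Proof.
  intros ha hsoc.
  destruct (Rlt_or_le 0 lambda) as [h | h]; [exact h |].
  assert (alpha * lambda <= 0) by nra.
  nra.
Qed.

Lemma beta_rule_mul_lt_half (alpha lambda : R) :
  0 < alpha -> 0 < lambda * (1 - alpha * lambda) ->
  2 * lambda * beta_rule alpha lambda < 1.
Proof.
  intros ha hsoc.
  pose proof (soc_lambda_pos alpha lambda ha hsoc) as hl.
  assert (hx : 0 < 1 - alpha * lambda) by nra.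
  assert (hfoc : (1 - 2 * lambda * beta_rule alpha lambda) * (1 - alpha * lambda)
                 = alpha * lambda).
  { unfold beta_rule. field. lra. }
  assert (0 < alpha * lambda) by nra.
  nra.
Qed.

Theorem proposition1
  (Sigma0 sigma_u beta1 beta2 lambda1 lambda2 alpha1 alpha2 Sigma1 Sigma2 : R)
  (hS0 : 0 < Sigma0) (hsu : 0 < sigma_u) (ha2 : alpha2 = 0)
  (hb1 : beta1 = beta_rule alpha1 lambda1)
  (hb2 : beta2 = beta_rule alpha2 lambda2)
  (hl1 : lambda1 = lambda_rule beta1 Sigma0 sigma_u)
  (hl2 : lambda2 = lambda_rule beta2 Sigma1 sigma_u)
  (hS1 : Sigma1 = (1 - lambda1 * beta1) * Sigma0)
  (hS2 : Sigma2 = (1 - lambda2 * beta2) * Sigma1)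
  (hsoc1 : 0 < lambda1 * (1 - alpha1 * lambda1))
  (hsoc2 : 0 < lambda2 * (1 - alpha2 * lambda2))
  (ha1 : alpha1 = 1 / (4 * lambda2 * (1 - alpha2 * lambda2))) :
  exists d : R, derivable_pt_lim (ell Sigma0 sigma_u) beta1 d /\ 0 < d.
Proof.
  assert (hsu0 : sigma_u <> 0) by lra.
  assert (halpha1 : 0 < alpha1).
  { rewrite ha1. apply Rdiv_lt_0_compat; lra. }
  assert (hlb : 2 * lambda1 * beta1 < 1).
  { rewrite hb1. exact (beta_rule_mul_lt_half alpha1 lambda1 halpha1 hsoc1). }
  rewrite hl1 in hlb.
  eexists; split.
  - exact (ell_derivative Sigma0 sigma_u beta1 (Rlt_le _ _ hS0) hsu0).
  - exact (ell_derivative_pos Sigma0 sigma_u beta1 hS0 hsu0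
             (lambda_rule_mul_lt_half beta1 Sigma0 sigma_u (Rlt_le _ _ hS0) hsu0 hlb)).
Qed.
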